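(* Let $n_1,n_2,n^*_1,n^*_2$ be integers with $1\le n_1\le n^*_1\le n^*_2\le n_2$, $n=n_1+n_2$, $n^*=n^*_1+n^*_2$. Let $\psi_1$ be an Archimedean generator with $\phi_1=\psi_1^{-1}$ and $0<\lambda_1\le\lambda_2$. Let $X_{1:n}(n_1,n_2)$ be the minimum of $n$ dependent nonnegative random variables sharing an Archimedean survival copula with generator $\psi_1$, $n_1$ of which have distribution function $x\mapsto F_1(\lambda_1x)$ and $n_2$ of which have distribution function $x\mapsto F_2(\lambda_2x)$; let $X_{1:n^*}(n^*_1,n^*_2)$ be defined analogously with $n^*_1,n^*_2$ in place of $n_1,n_2$ (same $\psi_1$, $F_1,F_2$, $\lambda_1,\lambda_2$). Suppose $F_1(x)\le F_2(x)$ for all $x$. Then $$(n_1,n_2)\succeq_w(n^*_1,n^*_2)\ \Longrightarrow\ X_{1:n}(n_1,n_2)\le_{st}X_{1:n^*}(n^*_1,n^*_2).$$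
   Context: Archimedean generator: a continuous nonincreasing $\psi:[0,\infty)\to[0,1]$ with $\psi(0)=1$, $\psi(\infty)=0$, which is $m$-monotone; $\phi=\psi^{-1}$. $Z_1,\dots,Z_m$ with marginal survival functions $\bar G_i=1-G_i$ share an Archimedean survival copula with generator $\psi$ if $P(Z_1>z_1,\dots,Z_m>z_m)=\psi(\sum_i\phi(\bar G_i(z_i)))$. $F_1,F_2$ are distribution functions of nonnegative random variables. For $\boldsymbol a,\boldsymbol b\in\mathbb R^k$ with increasingly ordered coordinates $a_{(1)}\le\dots\le a_{(k)}$: $\boldsymbol a\succeq_w\boldsymbol b$ means $\sum_{i=l}^ka_{(i)}\ge\sum_{i=l}^kb_{(i)}$ for all $l$. $U\le_{st}V$ means $P(U>x)\le P(V>x)$ for all $x$. *)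

From HB Require Import structures.
From mathcomp Require Import all_boot all_order all_algebra.
From mathcomp Require Import all_classical all_reals all_analysis.
Set Implicit Arguments. Unset Strict Implicit. Unset Printing Implicit Defensive.
Import Order.TTheory GRing.Theory Num.Theory.
Import numFieldNormedType.Exports.
Local Open Scope classical_set_scope.
Local Open Scope ring_scope.

Section Defs.
Variable R : realType.

Definition convex_on (D : set R) (g : R -> R) : Prop :=
  forall x y t, D x -> D y -> 0 <= t <= 1 ->
    g (t * x + (1 - t) * y) <= t * g x + (1 - t) * g y.

(* d-monotonicity on (0,+oo) (McNeil & Neslehova 2009), d >= 2:
   psi has derivatives up to order d-2 on (0,oo), (-1)^k psi^(k) >= 0
   for k = 0..d-2, and (-1)^(d-2) psi^(d-2) is nonincreasing and convex
   on (0,oo). *)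
Definition d_monotone (d : nat) (psi : R -> R) : Prop :=
  (2 <= d)%N /\
  (forall k x, (k < d - 2)%N -> 0 < x -> derivable (derive1n k psi) x 1) /\
  (forall k x, (k <= d - 2)%N -> 0 < x -> 0 <= (-1) ^+ k * derive1n k psi x) /\
  (forall x y, 0 < x -> x <= y ->
     (-1) ^+ (d - 2) * derive1n (d - 2) psi y <=
     (-1) ^+ (d - 2) * derive1n (d - 2) psi x) /\
  convex_on `]0, +oo[ (fun x => (-1) ^+ (d - 2) * derive1n (d - 2) psi x).

Definition archimedean_generator (m : nat) (psi : R -> R) : Prop :=
  {within `[0, +oo[, continuous psi} /\
  (forall x y, 0 <= x -> x <= y -> psi y <= psi x) /\
  (forall x, 0 <= x -> 0 <= psi x <= 1) /\
  psi 0 = 1 /\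
  psi x @[x --> +oo] --> (0 : R) /\
  d_monotone m psi.

(* phi = psi^{-1}: the (generalized) inverse of psi, extended-real valued,
   phi t = inf {x >= 0 | psi x <= t}  (= +oo when the set is empty). *)
Definition arch_inv (psi : R -> R) (t : R) : \bar R :=
  ereal_inf [set x%:E | x in [set x : R | 0 <= x /\ psi x <= t]].

Definition arch_ext (psi : R -> R) (x : \bar R) : R :=
  match x with
  | r%:E => psi r
  | +oo%E => 0
  | -oo%E => 1
  end.

Definition nonneg_cdf (F : R -> R) : Prop :=
  {homo F : x y / x <= y} /\
  (forall x, F x @[x --> x^'+] --> F x) /\
  (forall x, x < 0 -> F x = 0) /\
  F x @[x --> +oo] --> (1 : R).

Definition arch_survival_copula d (T : measurableType d) (P : probability T R)
  (m : nat) (Z : 'I_m -> T -> R) (G : 'I_m -> R -> R) (psi : R -> R) : Prop :=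
  (forall i, measurable_fun setT (Z i)) /\
  (forall i x, P [set w | Z i w <= x] = (G i x)%:E) /\
  (forall z : 'I_m -> R,
     P [set w | forall i, z i < Z i w] =
     (arch_ext psi (\sum_(i < m) arch_inv psi (1 - G i (z i)))%E)%:E).

Definition min_rv d (T : measurableType d) (m : nat) (Z : 'I_m -> T -> R)
  (w : T) : \bar R :=
  \big[Order.min/+oo%E]_(i < m) (Z i w)%:E.

Definition two_type_df (n1 n2 : nat) (F1 F2 : R -> R) (l1 l2 : R)
  (i : 'I_(n1 + n2)) (x : R) : R :=
  if (i < n1)%N then F1 (l1 * x) else F2 (l2 * x).

(* weak supermajorization a >=_w b on vectors of the same length:
   sums of the largest entries of a dominate those of b *)
Definition weakly_supmajorizes (a b : seq R) : Prop :=
  size a = size b /\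
  forall l : nat,
    \sum_(x <- drop l (sort <=%R a)) x >= \sum_(x <- drop l (sort <=%R b)) x.

Definition st_le d1 d2 (T1 : measurableType d1) (T2 : measurableType d2)
  (P1 : probability T1 R) (P2 : probability T2 R)
  (U : T1 -> \bar R) (V : T2 -> \bar R) : Prop :=
  forall x : R, (P1 [set w | x%:E < U w] <= P2 [set w | x%:E < V w])%E.

End Defs.

From HB Require Import structures.
From mathcomp Require Import all_boot all_order all_algebra.
From mathcomp Require Import all_classical all_reals all_analysis.
Import Order.TTheory GRing.Theory Num.Theory.
Set Implicit Arguments.
Unset Strict Implicit.
Unset Printing Implicit Defensive.

Local Open Scope ring_scope.
Local Open Scope classical_set_scope.

(* The survival function of the minimum at x is psi (n1 A + n2 B), where
   A = phi (1 - F1 (l1 x)) and B = phi (1 - F2 (l2 x)).  As phi is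
   nonincreasing and F1 (l1 x) <= F2 (l2 x), we have 0 <= A <= B.  Since
   n1 <= ns1 and, by weak supermajorization, ns1 + ns2 <= n1 + n2, moving
   weight from A to B gives ns1 A + ns2 B <= n1 A + n2 B; psi being
   nonincreasing reverses this inequality. *)

Section ExtendedNatmul.
Variable R : realType.
Local Open Scope ereal_scope.

Lemma enatmul_ge0 (a : \bar R) n : 0 <= a -> 0 <= (a *+ n)%R.
Proof.
move=> a0; elim: n => [|n IH]; first by rewrite mulr0n.
by rewrite mulrS adde_ge0.
Qed.

Lemma lee_enatmul2l (a : \bar R) m n : 0 <= a -> (m <= n)%N ->
  (a *+ m)%R <= (a *+ n)%R.
Proof.
by move=> a0 mn; rewrite -(subnKC mn) mulrnDr leeDl // enatmul_ge0.
Qed.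

Lemma lee_enatmul2r (a b : \bar R) n : a <= b -> (a *+ n)%R <= (b *+ n)%R.
Proof.
move=> ab; elim: n => [|n IH]; first by rewrite !mulr0n.
by rewrite !mulrS leeD.
Qed.

Lemma lee_enatmul_transfer (a b : \bar R) (m1 m2 k1 k2 : nat) :
  0 <= a -> a <= b -> (m1 <= k1)%N -> (k1 + k2 <= m1 + m2)%N ->
  (a *+ k1 + b *+ k2)%R <= (a *+ m1 + b *+ m2)%R.
Proof.
move=> a0 ab mk km; rewrite -(subnKC mk) mulrnDr -addrA.
apply: leeD => //; have b0 : 0 <= b := le_trans a0 ab.
apply: le_trans (_ : (b *+ (k1 - m1)%N + b *+ k2)%R <= _).
  by apply: leeD => //; exact: lee_enatmul2r.
rewrite -mulrnDr lee_enatmul2l //.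
by rewrite -(leq_add2l m1) addnA subnKC.
Qed.

End ExtendedNatmul.

Section ArchimedeanInverse.
Variables (R : realType) (psi : R -> R).

Lemma arch_inv_ge0 t : (0 <= arch_inv psi t)%E.
Proof. by apply: le_ereal_inf_tmp => _ [y [y0 _] <-]; rewrite lee_fin. Qed.

Lemma arch_inv_le s t : s <= t -> (arch_inv psi t <= arch_inv psi s)%E.
Proof.
move=> st; apply: ereal_inf_le_tmp => _ [y [y0 psiy] <-].
by exists y => //; split => //; exact: le_trans st.
Qed.

Hypothesis psi_le : forall x y, 0 <= x -> x <= y -> psi y <= psi x.
Hypothesis psi_ge0 : forall x, 0 <= x -> 0 <= psi x.

Lemma arch_ext_le (u v : \bar R) : (0 <= u)%E -> (u <= v)%E ->
  arch_ext psi v <= arch_ext psi u.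
Proof.
case: u => [r| |] //; case: v => [s| |] //=; rewrite ?lee_fin.
- exact: psi_le.
- by move=> r0 _; exact: psi_ge0.
Qed.

End ArchimedeanInverse.

Section MinimumSurvival.
Variables (R : realType) (d : measure_display) (T : measurableType d).
Variables (P : probability T R) (m : nat) (Z : 'I_m -> T -> R).

Lemma min_rv_gt (x : R) :
  [set w | (x%:E < min_rv Z w)%E] = [set w | forall i, x < Z i w].
Proof.
apply/seteqP; split => w /=.
  by move=> /bigmin_gtP[_ xZ] i; rewrite -lte_fin xZ.
by move=> xZ; apply/bigmin_gtP; split => [|i _]; rewrite ?ltry ?lte_fin.
Qed.

Lemma arch_survival_min (G : 'I_m -> R -> R) (psi : R -> R) (x : R) :
  arch_survival_copula P Z G psi ->
  P [set w | (x%:E < min_rv Z w)%E] =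
  (arch_ext psi (\sum_(i < m) arch_inv psi (1 - G i x))%E)%:E.
Proof. by move=> [_ [_ survZ]]; rewrite min_rv_gt (survZ (fun=> x)). Qed.

End MinimumSurvival.

Section TwoTypeSample.
Variables (R : realType) (F1 F2 : R -> R) (l1 l2 : R).

Lemma sum_two_type_df n1 n2 x (f : R -> \bar R) :
  (\sum_(i < n1 + n2) f (1 - two_type_df F1 F2 l1 l2 i x))%R =
  (f (1 - F1 (l1 * x)) *+ n1 + f (1 - F2 (l2 * x)) *+ n2)%R.
Proof.
rewrite big_split_ord /= -[n1 in RHS]card_ord -[n2 in RHS]card_ord.
rewrite -!sumr_const; congr (_ + _)%R; apply: eq_bigr => i _.
  by rewrite /two_type_df /= ltn_ord.
by rewrite /two_type_df /= ltnNge leq_addr.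
Qed.

Lemma two_type_df_le x : 0 < l1 -> l1 <= l2 -> nonneg_cdf F1 -> nonneg_cdf F2 ->
  (forall y, F1 y <= F2 y) -> F1 (l1 * x) <= F2 (l2 * x).
Proof.
move=> l1_gt0 l12 [F1_nd [_ [F1_neg _]]] [_ [_ [F2_neg _]]] F12.
have [x_lt0|x_ge0] := ltP x 0.
  rewrite F1_neg ?F2_neg // pmulr_rlt0 //; exact: lt_le_trans l12.
by apply: le_trans (F12 _); apply: F1_nd; exact: ler_wpM2r.
Qed.

End TwoTypeSample.

Lemma weakly_supmajorizes_sum (R : realType) (a b : seq R) :
  weakly_supmajorizes a b -> \sum_(x <- b) x <= \sum_(x <- a) x.
Proof.
move=> [_ /(_ 0%N)]; rewrite !drop0.
by rewrite !(perm_big _ (permEl (perm_sort _ _))).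
Qed.

Theorem theorem3p9 (R : realType) (n1 n2 ns1 ns2 : nat)
  (psi : R -> R) (F1 F2 : R -> R) (l1 l2 : R)
  (d1 d2 : measure_display)
  (T1 : measurableType d1) (P1 : probability T1 R)
  (T2 : measurableType d2) (P2 : probability T2 R)
  (X : 'I_(n1 + n2) -> T1 -> R) (Y : 'I_(ns1 + ns2) -> T2 -> R) :
  (1 <= n1)%N -> (n1 <= ns1)%N -> (ns1 <= ns2)%N -> (ns2 <= n2)%N ->
  archimedean_generator (n1 + n2) psi ->
  0 < l1 -> l1 <= l2 ->
  nonneg_cdf F1 -> nonneg_cdf F2 ->
  (forall i w, 0 <= X i w) -> (forall j w, 0 <= Y j w) ->
  arch_survival_copula P1 X (two_type_df F1 F2 l1 l2) psi ->
  arch_survival_copula P2 Y (two_type_df F1 F2 l1 l2) psi ->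
  (forall x, F1 x <= F2 x) ->
  @weakly_supmajorizes R [:: n1%:R; n2%:R] [:: ns1%:R; ns2%:R] ->
  st_le P1 P2 (min_rv X) (min_rv Y).
Proof.
move=> _ n1_le _ _ [_ [psi_le [psi_01 _]]] l1_gt0 l12 F1_cdf F2_cdf _ _
  copX copY F12 maj x.
rewrite (arch_survival_min x copX) (arch_survival_min x copY) lee_fin.
apply: arch_ext_le => //.
- by move=> y /psi_01 /andP[].
- by apply: sume_ge0 => i _; exact: arch_inv_ge0.
rewrite !sum_two_type_df; apply: lee_enatmul_transfer.
- exact: arch_inv_ge0.
- by apply: arch_inv_le; rewrite lerD2l lerN2 two_type_df_le.
- exact: n1_le.
- move/weakly_supmajorizes_sum: maj.
  by rewrite !big_cons !big_nil !addr0 -!natrD ler_nat.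
Qed.
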